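(* Let $G$ be a connected simple graph with maximum degree at most $3$ and minimum degree at least $2$, in which no two adjacent vertices both have degree $3$. Let $M_1,M_2$ be disjoint matchings of $G$ such that $|M_1\cup M_2|$ is maximum over all pairs of disjoint matchings, and, subject to this, such that the graph $G_{M_1,M_2}$ has the minimum number of connected components. Then each connected component of $G_{M_1,M_2}$ is a path $P_2$ or a path $P_3$, and if a component is a $P_3$, then its middle vertex has degree $2$ in $G$.
   Context: $G_{M_1,M_2}$ denotes the subgraph of $G$ induced by the edge set $E(G)\setminus(M_1\cup M_2)$ (its vertices are the endpoints of these edges). $P_k$ denotes a path on $k$ vertices. *)

From mathcomp Require Import all_boot.
Set Implicit Arguments. Unset Strict Implicit. Unset Printing Implicit Defensive.

(* A simple graph: vertex type T (finite), adjacency e : rel T,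
   assumed symmetric and irreflexive.  Edges are 2-element vertex sets. *)
Section Graph.
Variables (T : finType) (e : rel T).

Definition simple_graph := symmetric e /\ irreflexive e.

Definition edges : {set {set T}} :=
  [set u : {set T} | [exists x, exists y, e x y && (u == [set x; y])]].

Definition deg (x : T) : nat := #|[set y | e x y]|.

Definition connected_graph := forall x y : T, connect e x y.

Definition matching (M : {set {set T}}) :=
  M \subset edges /\
  forall u v, u \in M -> v \in M -> u != v -> [disjoint u & v].

(* Edge set of G_{M1,M2}. *)
Definition rest_edges (M1 M2 : {set {set T}}) : {set {set T}} :=
  edges :\: (M1 :|: M2).

Definition rest_rel (M1 M2 : {set {set T}}) : rel T :=
  fun x y => [set x; y] \in rest_edges M1 M2.

(* Vertex set of G_{M1,M2}: endpoints of its edges. *)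
Definition rest_verts (M1 M2 : {set {set T}}) : {set T} :=
  [set x | [exists y, rest_rel M1 M2 x y]].

Definition rest_comps (M1 M2 : {set {set T}}) : {set {set T}} :=
  [set [set y | connect (rest_rel M1 M2) x y] | x in rest_verts M1 M2].

Definition ncomp (M1 M2 : {set {set T}}) : nat := #|rest_comps M1 M2|.

Definition comp_edges (M1 M2 : {set {set T}}) (C : {set T}) : {set {set T}} :=
  [set u in rest_edges M1 M2 | u \subset C].

Definition path_edges (s : seq T) : {set {set T}} :=
  [set u | u \in [seq [set p.1; p.2] | p <- zip s (behead s)]].

Definition is_path_comp (M1 M2 : {set {set T}}) (C : {set T}) (s : seq T) :=
  [/\ uniq s, C = [set x | x \in s] & comp_edges M1 M2 C = path_edges s].

Definition disjoint_matchings (M1 M2 : {set {set T}}) :=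
  [/\ matching M1, matching M2 & [disjoint M1 & M2]].

Definition optimal_pair (M1 M2 : {set {set T}}) :=
  [/\ disjoint_matchings M1 M2,
      (forall N1 N2, disjoint_matchings N1 N2 -> #|N1 :|: N2| <= #|M1 :|: M2|)
    & (forall N1 N2, disjoint_matchings N1 N2 ->
         #|N1 :|: N2| = #|M1 :|: M2| -> ncomp M1 M2 <= ncomp N1 N2)].

End Graph.

From mathcomp Require Import all_boot zify.
Set Implicit Arguments. Unset Strict Implicit. Unset Printing Implicit Defensive.

(* Let R be the graph G_{M1,M2}. Every vertex satisfies
   deg x = [x covered by M1] + [x covered by M2] + deg_R x.
   Maximality of |M1 u M2| forbids an R-edge between two vertices missed by the
   same matching, so an R-neighbour of a vertex missed by M_i is covered by M_i.
   With maximum degree 3 and no two adjacent vertices of degree 3 this gives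
   deg_R <= 2. If deg_R x = 2 and deg x = 3, then x is covered by exactly one
   matching, say M1, and both its R-neighbours are covered by M2 only; they are
   ends of paths of M1 u M2 distinct from x, so one of them, t, is not on the
   alternating path starting at x. Exchanging M1 and M2 on that path and adding
   the edge xt to M1 enlarges M1 u M2. Hence a vertex of R-degree 2 has degree 2,
   is missed by both matchings, and its R-neighbours have R-degree 1: every
   component of R is a P2 or a P3 centred at a vertex of degree 2. *)

Lemma eq_set2 (T : finType) (x y p q : T) :
  [set x; y] = [set p; q] -> (x = p /\ y = q) \/ (x = q /\ y = p).
Proof.
move=> E.
have /set2P[] : x \in [set p; q] by rewrite -E set21.
all: have /set2P[] : y \in [set p; q] by rewrite -E set22.
all: have /set2P[] : p \in [set x; y] by rewrite E set21.
all: have /set2P[] : q \in [set x; y] by rewrite E set22.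
all: by move=> *; subst; auto.
Qed.

Lemma set2_inj (T : finType) (x : T) : injective (fun y => [set x; y]).
Proof. by move=> y z /eq_set2[] [] // <- <-. Qed.

Definition deg_in (T : finType) (F : {set {set T}}) (x : T) : nat :=
  #|[set a in F | x \in a]|.

Section Incidence.
Variable T : finType.
Implicit Types (F A B : {set {set T}}) (a : {set T}) (x : T).

Lemma deg_in_eq0 F a x : deg_in F x = 0 -> a \in F -> x \notin a.
Proof. by move=> /card0_eq/(_ a) + aF; rewrite !inE aF => /negbT. Qed.

Lemma deg_in_eq1 F x : deg_in F x = 1 ->
  exists a, [/\ a \in F, x \in a & forall b, b \in F -> x \in b -> b = a].
Proof.
move/eqP/cards1P=> [a Fx]; have /setP Fxb := Fx; exists a.
have := Fxb a; rewrite !inE eqxx => /andP[aF xa]; split=> // b bF xb.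
by have := Fxb b; rewrite !inE bF xb => /esym/eqP.
Qed.

Lemma deg_inU A B x :
  [disjoint A & B] -> deg_in (A :|: B) x = deg_in A x + deg_in B x.
Proof.
move=> dAB; rewrite /deg_in -cardsUI.
suff -> : [set a in A | x \in a] :&: [set a in B | x \in a] = set0.
  by rewrite cards0 addn0; apply: eq_card => a; rewrite !inE andb_orl.
apply/setP=> a; rewrite !inE andbACA andbb.
by case aA: (a \in A); rewrite // (disjointFr dAB aA).
Qed.

Lemma deg_inD1 F a x : a \in F -> deg_in F x = (x \in a) + deg_in (F :\ a) x.
Proof.
move=> aF; rewrite /deg_in (cardsD1 a) !inE aF /=; congr (_ + _).
by apply: eq_card => b; rewrite !inE andbA.
Qed.

Lemma deg_in_subset F A x : A \subset F -> deg_in A x <= deg_in F x.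
Proof.
move=> sAF; apply: subset_leq_card; apply/subsetP=> a.
by rewrite !inE => /andP[/(subsetP sAF) -> ->].
Qed.

End Incidence.

Section Edges.
Variables (T : finType) (e : rel T).
Implicit Types (F M A B : {set {set T}}) (a : {set T}) (x y : T).

Lemma edgesP a : reflect (exists x y, e x y /\ a = [set x; y]) (a \in edges e).
Proof.
rewrite inE; apply: (iffP existsP) => [[x /existsP[y /andP[exy /eqP ->]]]|].
  by exists x, y.
by case=> x [y [exy ->]]; exists x; apply/existsP; exists y; rewrite exy eqxx.
Qed.

Lemma deg_in_nbr F x :
  F \subset edges e -> deg_in F x = #|[set y | [set x; y] \in F]|.
Proof.
move=> sFE; rewrite -(card_imset _ (@set2_inj _ x)); apply: eq_card => a.
rewrite !inE; apply/andP/imsetP => [[aF xa]|[y]]; last first.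
  by rewrite inE => yF ->; rewrite yF set21.
have /edgesP[p [q [_ apq]]] := subsetP sFE a aF; move: xa aF.
rewrite apq => /set2P[] <-; first by exists q; rewrite ?inE.
by rewrite setUC; exists p; rewrite ?inE.
Qed.

Hypothesis esym : symmetric e.

Lemma set2_in_edges x y : ([set x; y] \in edges e) = e x y.
Proof.
apply/edgesP/idP => [[p [q [epq /eq_set2[] [-> ->]]]]|exy] //.
  by rewrite esym.
by exists x, y.
Qed.

Lemma deg_edges x : deg e x = deg_in (edges e) x.
Proof.
by rewrite deg_in_nbr //; apply: eq_card => y; rewrite [RHS]inE set2_in_edges inE.
Qed.

Hypothesis eirr : irreflexive e.

Lemma card_edge a : a \in edges e -> #|a| = 2.
Proof.
case/edgesP=> x [y [exy ->]]; rewrite cards2.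
by case: eqVneq exy => // ->; rewrite eirr.
Qed.

Lemma matching_deg_in M x : matching e M -> deg_in M x <= 1.
Proof.
case=> _ disjM; rewrite leqNgt; apply/card_gt1P => -[a [b []]].
rewrite !inE => /andP[aM xa] /andP[bM xb] nab.
by have := disjointFr (disjM a b aM bM nab) xa; rewrite xb.
Qed.

Lemma matching_subset M A : matching e M -> A \subset M -> matching e A.
Proof.
case=> sME disjM sAM; split; first exact: subset_trans sAM sME.
by move=> a b /(subsetP sAM) aM /(subsetP sAM); apply: disjM.
Qed.

Lemma matchingU A B : matching e A -> matching e B ->
  (forall a b, a \in A -> b \in B -> [disjoint a & b]) -> matching e (A :|: B).
Proof.
case=> sAE disjA [sBE disjB] disjAB; split; first by rewrite subUset sAE.
move=> a b /setUP[aA|aB] /setUP[bA|bB] nab; auto.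
by rewrite disjoint_sym; apply: disjAB.
Qed.

Lemma matching_add_edge M x y : matching e M -> e x y ->
  deg_in M x = 0 -> deg_in M y = 0 -> matching e ([set x; y] |: M).
Proof.
move=> mM exy Mx My; apply: matchingU => //.
  split=> [|a b /set1P-> /set1P->]; last by rewrite eqxx.
  by apply/subsetP=> a /set1P->; rewrite set2_in_edges.
move=> a b /set1P-> bM.
by rewrite disjoints_subset subUset !sub1set !inE !(deg_in_eq0 _ bM).
Qed.

End Edges.

Definition edge_closed (T : finType) (E : {set {set T}}) (S : {set T}) :=
  forall a, a \in E -> a \subset S \/ [disjoint a & S].

Section PathEnds.
Variable T : finType.
Implicit Types (E : {set {set T}}) (a S : {set T}) (v x : T).

Lemma disjointsU1r a v S :
  [disjoint a & v |: S] = (v \notin a) && [disjoint a & S].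
Proof.
rewrite disjoints_subset setCU subsetI -!disjoints_subset.
by rewrite disjoint_sym disjoints1.
Qed.

Lemma edge_closed_set1 E y : deg_in E y = 0 -> edge_closed E [set y].
Proof.
by move=> Ey0 b bE; right; rewrite disjoint_sym disjoints1 (deg_in_eq0 Ey0 bE).
Qed.

Lemma edge_closedU1 E S a v y :
  a \in E -> a = [set v; y] -> (forall b, b \in E -> v \in b -> b = a) ->
  y \in S -> edge_closed (E :\ a) S -> edge_closed E (v |: S).
Proof.
move=> aE avy a_uniq yS closedS b bE; case: (eqVneq b a) => [->|ba].
  by left; rewrite avy subUset !sub1set setU11 setU1r.
have vb : v \notin b := contra_neqN (a_uniq b bE) ba.
case: (closedS b); first by rewrite !inE ba.
  by move=> sbS; left; apply: subset_trans sbS (subsetU1 _ _).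
by move=> dbS; right; rewrite disjointsU1r vb.
Qed.

Lemma closed_set_from_end E v :
  (forall a, a \in E -> #|a| = 2) -> (forall x, deg_in E x <= 2) ->
  deg_in E v = 1 ->
  exists S, [/\ v \in S, edge_closed E S &
    exists w, forall x, x \in S -> deg_in E x = 1 -> x = v \/ x = w].
Proof.
have [n] := ubnP #|E|; elim: n E v => // n IH E v ltEn E2 E_le2 Ev1.
have [a0 [a0E va0 a0_uniq]] := deg_in_eq1 Ev1.
have [y [vy a0vy]] : exists y, v != y /\ a0 = [set v; y].
  have /eqP/cards2P[p [q [pq a0pq]]] := E2 a0 a0E.
  move: va0; rewrite a0pq => /set2P[] ->; first by exists q.
  by exists p; rewrite setUC eq_sym.
have closedU1 := edge_closedU1 a0E a0vy a0_uniq.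
have Ey : deg_in E y = (deg_in (E :\ a0) y).+1.
  by rewrite (deg_inD1 y a0E) {1}a0vy set22.
case: (posnP (deg_in (E :\ a0) y)) => [E'y0|E'y_pos].
  exists [set v; y]; split; first by rewrite set21.
    exact: closedU1 (set11 y) (edge_closed_set1 E'y0).
  by exists y => x /set2P[]; auto.
have E'y1 : deg_in (E :\ a0) y = 1 by have := E_le2 y; lia.
have [|||S' [yS' closedS' [w endsS']]] := IH (E :\ a0) y _ _ _ E'y1.
- by move: ltEn; rewrite (cardsD1 a0 E) a0E.
- by move=> a /setD1P[_ /E2].
- by move=> x; apply: leq_trans (E_le2 x); apply: deg_in_subset; apply: subsetDl.
exists (v |: S'); split; [by rewrite setU11 | exact: closedU1 yS' closedS' |].
exists w => x /setU1P[->|xS'] Ex1; first by left.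
have Ex := deg_inD1 x a0E.
case/boolP: (x \in a0) Ex => [|_ Ex'].
  rewrite a0vy => /set2P[] xe _; subst x; first by left.
  by rewrite Ey E'y1 in Ex1.
by case: (endsS' x xS'); [lia | move=> xy; subst x; lia | right].
Qed.

End PathEnds.

Definition swap_in (T : finType) (S : {set T}) (A B : {set {set T}}) :=
  [set a in A | ~~ (a \subset S)] :|: [set b in B | b \subset S].

Section Swap.
Variables (T : finType) (e : rel T) (S : {set T}) (A B : {set {set T}}).
Implicit Types (a : {set T}) (x : T).

Lemma swap_inUC : swap_in S A B :|: swap_in S B A = A :|: B.
Proof.
apply/setP=> a; rewrite !inE.
by case: (a \in A); case: (a \in B); case: (a \subset S).
Qed.

Lemma disjoint_swap_in :
  [disjoint A & B] -> [disjoint swap_in S A B & swap_in S B A].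
Proof.
move=> dAB; rewrite -setI_eq0; apply/eqP/setP=> a; rewrite !inE.
case aA: (a \in A); first by rewrite (disjointFr dAB aA); case: (a \subset S).
by case: (a \in B); case: (a \subset S).
Qed.

Hypothesis closedS : edge_closed (A :|: B) S.

Lemma edge_closed_out a x :
  a \in A :|: B -> ~~ (a \subset S) -> x \in a -> x \notin S.
Proof. by move=> /closedS[->//|/disjointFr dS _ /dS->]. Qed.

Lemma matching_swap_in :
  matching e A -> matching e B -> matching e (swap_in S A B).
Proof.
move=> mA mB; apply: matchingU.
- by apply: matching_subset mA _; apply/subsetP=> a /setIdP[].
- by apply: matching_subset mB _; apply/subsetP=> a /setIdP[].
move=> a b /setIdP[aA aS] /setIdP[_ bS]; rewrite disjoint_sym disjoints_subset.
apply/subsetP=> x /(subsetP bS) xS; rewrite inE; apply: contraL xS.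
by apply: edge_closed_out aS; rewrite inE aA.
Qed.

Lemma deg_in_swap_in_in x : x \in S -> deg_in (swap_in S A B) x = deg_in B x.
Proof.
move=> xS; apply: eq_card => a; rewrite !inE.
case xa: (x \in a); rewrite ?andbF // !andbT.
case aS: (a \subset S); rewrite ?andbF ?andbT ?orbF //.
have : a \notin A :|: B.
  by apply/negP=> /edge_closed_out/(_ (negbT aS) xa); rewrite xS.
by rewrite inE => /norP[/negbTE-> /negbTE->].
Qed.

Lemma deg_in_swap_in_out x : x \notin S -> deg_in (swap_in S A B) x = deg_in A x.
Proof.
move=> xS; apply: eq_card => a; rewrite !inE.
case xa: (x \in a); rewrite ?andbF // !andbT.
have -> : (a \subset S) = false by apply: contraNF xS => /subsetP/(_ x xa).
by rewrite andbT andbF orbF.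
Qed.

End Swap.

Definition max_pair (T : finType) (e : rel T) (A B : {set {set T}}) :=
  disjoint_matchings e A B /\
  forall N1 N2, disjoint_matchings e N1 N2 -> #|N1 :|: N2| <= #|A :|: B|.

Section RestGraph.
Variables (T : finType) (e : rel T).
Hypotheses (esym : symmetric e) (eirr : irreflexive e).
Implicit Types (A B : {set {set T}}) (S : {set T}) (x y : T).

Lemma rest_relC A B : rest_rel e B A = rest_rel e A B.
Proof. by rewrite /rest_rel /rest_edges setUC. Qed.

Lemma rest_rel_sym A B : symmetric (rest_rel e A B).
Proof. by move=> x y; rewrite /rest_rel setUC. Qed.

Lemma rest_relE A B x y :
  rest_rel e A B x y = ([set x; y] \notin A :|: B) && e x y.
Proof. by rewrite /rest_rel /rest_edges in_setD set2_in_edges. Qed.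

Lemma rest_rel_irr A B : irreflexive (rest_rel e A B).
Proof. by move=> x; rewrite rest_relE eirr andbF. Qed.

Lemma rest_rel_edge A B x y : rest_rel e A B x y -> e x y.
Proof. by rewrite rest_relE => /andP[]. Qed.

Lemma deg_split A B x : disjoint_matchings e A B ->
  deg e x = deg_in A x + deg_in B x + deg (rest_rel e A B) x.
Proof.
case=> mA mB dAB; have sABE : A :|: B \subset edges e.
  by rewrite subUset mA.1 mB.1.
have dABR : [disjoint A :|: B & rest_edges e A B].
  by rewrite -setI_eq0 /rest_edges setDE setICA setICr setI0.
rewrite deg_edges // -(setID (edges e) (A :|: B)) (setIidPr sABE).
by rewrite !deg_inU // (deg_in_nbr _ (subsetDl _ _)).
Qed.

Lemma max_pairC A B : max_pair e A B -> max_pair e B A.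
Proof.
case=> -[mA mB dAB] maxAB; split; first by split=> //; rewrite disjoint_sym.
by rewrite [B :|: A]setUC.
Qed.

Lemma max_pair_swap_in A B S : max_pair e A B -> edge_closed (A :|: B) S ->
  max_pair e (swap_in S A B) (swap_in S B A).
Proof.
case=> -[mA mB dAB] maxAB closedS; rewrite /max_pair swap_inUC; split=> //.
have closedS' : edge_closed (B :|: A) S by rewrite setUC.
by split; [exact: matching_swap_in | exact: matching_swap_in |
  exact: disjoint_swap_in].
Qed.

Lemma max_pair_no_augmenting A B x y : max_pair e A B ->
  rest_rel e A B x y -> deg_in A x = 0 -> deg_in A y = 0 -> False.
Proof.
case=> -[mA mB dAB] maxAB; rewrite rest_relE => /andP[xyAB exy] Ax Ay.
suff /maxAB : disjoint_matchings e ([set x; y] |: A) B.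
  by rewrite -setUA cardsU1 xyAB ltnn.
split; [exact: matching_add_edge | by [] |].
rewrite -setI_eq0 setIUl (disjoint_setI0 dAB) setU0 setI_eq0 disjoints1.
by move: xyAB; rewrite inE negb_or => /andP[].
Qed.

End RestGraph.

Section MaximumPair.
Variables (T : finType) (e : rel T).
Hypotheses (esym : symmetric e) (eirr : irreflexive e).
Variables (A B : {set {set T}}).
Hypothesis maxAB : max_pair e A B.
Local Notation R := (rest_rel e A B).

Lemma rest_nbr_covered x y : R x y -> deg_in A x = 0 -> deg_in A y = 1.
Proof.
case: maxAB => -[mA _ _] _ Rxy Ax; have := matching_deg_in y mA.
case: (posnP (deg_in A y)) => [Ay0 _|]; last by lia.
by case: (max_pair_no_augmenting esym maxAB Rxy Ax Ay0).
Qed.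

Lemma no_augmenting_swap S v t :
  edge_closed (A :|: B) S -> v \in S -> t \notin S ->
  deg_in B v = 0 -> deg_in A t = 0 -> R v t -> False.
Proof.
move=> closedS vS tS Bv At Rvt.
have maxS := max_pair_swap_in maxAB closedS.
apply: (max_pair_no_augmenting esym maxS (x := v) (y := t)).
- by rewrite /rest_rel /rest_edges swap_inUC.
- by rewrite deg_in_swap_in_in.
- by rewrite deg_in_swap_in_out.
Qed.

Lemma no_alternating_fork v u w : u != w -> R v u -> R v w ->
  deg_in A v = 1 -> deg_in B v = 0 ->
  deg_in A u = 0 -> deg_in B u = 1 -> deg_in A w = 0 -> deg_in B w = 1 -> False.
Proof.
case: maxAB => -[mA mB dAB] _ uw Rvu Rvw Av Bv Au Bu Aw Bw.
have ABdeg x : deg_in (A :|: B) x = deg_in A x + deg_in B x := deg_inU x dAB.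
have [|||S [vS closedS [z endS]]] := @closed_set_from_end _ (A :|: B) v.
- move=> a aAB; apply: (card_edge eirr); apply: subsetP aAB.
  by rewrite subUset mA.1 mB.1.
- move=> x; rewrite ABdeg.
  exact: leq_add (matching_deg_in x mA) (matching_deg_in x mB).
- by rewrite ABdeg Av Bv.
have vu : u != v by apply: contraTneq Rvu => ->; rewrite rest_rel_irr.
have vw : w != v by apply: contraTneq Rvw => ->; rewrite rest_rel_irr.
have [t [tS Rvt At]] : exists t, [/\ t \notin S, R v t & deg_in A t = 0].
  case: (boolP (u \in S)) => uS; last by exists u.
  case: (boolP (w \in S)) => wS; last by exists w.
  have ABu : deg_in (A :|: B) u = 1 by rewrite ABdeg Au Bu.
  have ABw : deg_in (A :|: B) w = 1 by rewrite ABdeg Aw Bw.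
  case: (endS u uS ABu) => [uv|uz]; first by rewrite uv eqxx in vu.
  case: (endS w wS ABw) => [wv|wz]; first by rewrite wv eqxx in vw.
  by rewrite uz wz eqxx in uw.
exact: no_augmenting_swap closedS vS tS Bv At Rvt.
Qed.

End MaximumPair.

Lemma rest_nbr_coveredC (T : finType) (e : rel T) (A B : {set {set T}}) x y :
  symmetric e -> max_pair e A B ->
  rest_rel e A B x y -> deg_in B x = 0 -> deg_in B y = 1.
Proof.
by move=> esym /max_pairC maxBA; rewrite -rest_relC; apply: rest_nbr_covered.
Qed.

Section RelDegree.
Variables (T : finType) (r : rel T).
Implicit Types x y z : T.

Lemma deg_gt0 x y : r x y -> 0 < deg r x.
Proof. by move=> rxy; apply/card_gt0P; exists y; rewrite inE. Qed.

Lemma deg_nbr x : 0 < deg r x -> exists y, r x y.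
Proof. by case/card_gt0P=> y; rewrite inE; exists y. Qed.

Lemma deg_eq1_nbr x y z : deg r x = 1 -> r x y -> r x z -> z = y.
Proof.
move/eqP/cards1P=> [t /setP Nx] rxy rxz.
by move: (Nx y) (Nx z); rewrite !inE rxy rxz => /esym/eqP-> /esym/eqP->.
Qed.

Lemma deg_eq2_nbr x y : deg r x = 2 -> r x y ->
  exists2 z, y != z & forall t, r x t = (t == y) || (t == z).
Proof.
move/eqP/cards2P=> [p [q [pq /setP Nx]]] rxy.
have Nx' t : r x t = (t == p) || (t == q) by move: (Nx t); rewrite !inE.
move: rxy; rewrite Nx' => /orP[]/eqP->; first by exists q.
by exists p; rewrite 1?eq_sym // => t; rewrite orbC.
Qed.

End RelDegree.

Section PathComponent.
Variables (T : finType) (e : rel T) (M1 M2 : {set {set T}}).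
Local Notation R := (rest_rel e M1 M2).
Implicit Types (s : seq T) (u : {set T}) (x y : T).

Lemma path_edges_cons x y s :
  path_edges [:: x, y & s] = [set x; y] |: path_edges (y :: s).
Proof. by apply/setP=> u; rewrite !inE. Qed.

Lemma path_edges1 x : path_edges [:: x] = set0.
Proof. by apply/setP=> u; rewrite !inE. Qed.

Lemma path_edges_sub x s u : u \in path_edges (x :: s) -> {subset u <= x :: s}.
Proof.
elim: s x => [|y s IH] x; first by rewrite path_edges1 inE.
rewrite path_edges_cons => /setU1P[-> z /set2P[]->|/IH sub z /sub].
- exact: mem_head.
- by rewrite !inE eqxx orbT.
- by move=> zs; rewrite inE zs orbT.
Qed.

Lemma path_edges_rest x s :
  path R x s -> path_edges (x :: s) \subset rest_edges e M1 M2.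
Proof.
elim: s x => [|y s IH] x; first by rewrite path_edges1 sub0set.
rewrite path_edges_cons /= => /andP[Rxy /IH sub].
by rewrite subUset sub1set sub andbT.
Qed.

Lemma is_path_comp_of_path x y s :
  uniq (y :: s) -> x \in y :: s -> path R y s ->
  (forall p q, p \in y :: s -> R p q -> [set p; q] \in path_edges (y :: s)) ->
  is_path_comp e M1 M2 [set z | connect R x z] (y :: s).
Proof.
move=> uniq_s xs pathR nbrs.
have closed_s : closed R (mem (y :: s)).
  move=> p q Rpq; apply/idP/idP => [ps|qs].
    exact: path_edges_sub (nbrs p q ps Rpq) q (set22 _ _).
  rewrite rest_rel_sym in Rpq.
  exact: path_edges_sub (nbrs q p qs Rpq) p (set22 _ _).
have compE : [set z | connect R x z] = [set z | z \in y :: s].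
  apply/setP=> z; rewrite !in_set; apply/idP/idP => [|zs].
    by move/(closed_connect closed_s) <-.
  have symR := sym_connect_sym (@rest_rel_sym _ e M1 M2).
  apply: (connect_trans _ (path_connect pathR zs)).
  by rewrite symR; apply: path_connect xs.
split=> //; rewrite compE; apply/setP=> u; rewrite /comp_edges in_set.
apply/andP/idP => [[uR usub]|upath].
  have /edgesP[p [q [_ upq]]] := subsetP (subsetDl _ _) u uR.
  rewrite upq in uR usub *; apply: nbrs uR.
  by have := subsetP usub p (set21 _ _); rewrite inE.
split; first exact: subsetP (path_edges_rest pathR) u upath.
by apply/subsetP=> z /(path_edges_sub upath); rewrite inE.
Qed.

End PathComponent.

Section SmallPaths.
Variables (T : finType) (e : rel T).
Hypotheses (esym : symmetric e) (eirr : irreflexive e).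
Variables (M1 M2 : {set {set T}}).
Local Notation R := (rest_rel e M1 M2).
Implicit Types a b c x : T.

Lemma rest_rel_neq x y : R x y -> x != y.
Proof. by apply: contraTneq => ->; rewrite rest_rel_irr. Qed.

Lemma is_path_comp_P2 a b x :
  R a b -> deg R a = 1 -> deg R b = 1 -> x \in [:: a; b] ->
  is_path_comp e M1 M2 [set z | connect R x z] [:: a; b].
Proof.
move=> Rab Ra1 Rb1 xs; have Rba : R b a by rewrite rest_rel_sym.
apply: is_path_comp_of_path => //=; first by rewrite inE rest_rel_neq.
  by rewrite Rab.
move=> p q; rewrite path_edges_cons path_edges1 setU0 !inE => /orP[]/eqP-> Rpq.
  by rewrite (deg_eq1_nbr Ra1 Rab Rpq).
by rewrite (deg_eq1_nbr Rb1 Rba Rpq) setUC.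
Qed.

Lemma is_path_comp_P3 a b c x :
  a != c -> (forall t, R b t = (t == a) || (t == c)) ->
  deg R a = 1 -> deg R c = 1 -> x \in [:: a; b; c] ->
  is_path_comp e M1 M2 [set z | connect R x z] [:: a; b; c].
Proof.
move=> ac Nb Ra1 Rc1 xs.
have Rab : R a b by rewrite rest_rel_sym Nb eqxx.
have Rbc : R b c by rewrite Nb eqxx orbT.
have Rcb : R c b by rewrite rest_rel_sym.
apply: is_path_comp_of_path => //=.
- by rewrite !inE negb_or ac !rest_rel_neq.
- by rewrite Rab Rbc.
move=> p q; rewrite !path_edges_cons path_edges1 setU0 !inE => /or3P[]/eqP-> Rpq.
- by rewrite (deg_eq1_nbr Ra1 Rab Rpq) eqxx.
- by move: Rpq; rewrite Nb => /orP[]/eqP->; rewrite ?[[set b; a]]setUC eqxx ?orbT.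
- by rewrite (deg_eq1_nbr Rc1 Rcb Rpq) setUC eqxx orbT.
Qed.

End SmallPaths.

Section Classification.
Variables (T : finType) (e : rel T).
Hypotheses (esym : symmetric e) (eirr : irreflexive e).
Hypothesis deg_le3 : forall x, deg e x <= 3.
Hypothesis no_adjacent_deg3 : forall x y, e x y -> ~ (deg e x = 3 /\ deg e y = 3).

Section Fork.
Variables (A B : {set {set T}}).
Hypothesis maxAB : max_pair e A B.
Local Notation R := (rest_rel e A B).

Lemma rest_deg_le2 x : deg R x <= 2.
Proof.
rewrite leqNgt; apply/negP => Rx3.
have dx := deg_split esym x maxAB.1; have dx3 := deg_le3 x.
have /deg_nbr[y Rxy] : 0 < deg R x by lia.
have Ax : deg_in A x = 0 by lia.
have Bx : deg_in B x = 0 by lia.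
have Ay := rest_nbr_covered esym maxAB Rxy Ax.
have By := rest_nbr_coveredC esym maxAB Rxy Bx.
have /deg_gt0 Ry : R y x by rewrite rest_rel_sym.
have dy := deg_split esym y maxAB.1; have dy3 := deg_le3 y.
by apply: (no_adjacent_deg3 (rest_rel_edge esym Rxy)); lia.
Qed.

Lemma no_rest_fork v : deg_in A v = 1 -> deg_in B v = 0 -> deg R v = 2 ->
  (forall t, R v t -> deg e t <= 2) -> False.
Proof.
move=> Av Bv Rv2 small.
have /deg_nbr[y Rvy] : 0 < deg R v by rewrite Rv2.
have [z yz Nv] := deg_eq2_nbr Rv2 Rvy.
have Rvz : R v z by rewrite Nv eqxx orbT.
have nbr t : R v t -> deg_in A t = 0 /\ deg_in B t = 1.
  move=> Rvt; have Bt := rest_nbr_coveredC esym maxAB Rvt Bv.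
  have /deg_gt0 Rt : R t v by rewrite rest_rel_sym.
  by have := deg_split esym t maxAB.1; have := small t Rvt; lia.
have [Ay By] := nbr y Rvy; have [Az Bz] := nbr z Rvz.
exact: (no_alternating_fork esym eirr maxAB yz Rvy Rvz Av Bv Ay By Az Bz).
Qed.

End Fork.

Lemma rest_deg2_deg A B x : max_pair e A B ->
  deg (rest_rel e A B) x = 2 -> deg e x = 2.
Proof.
move=> maxAB Rx2; have [mA mB _] := maxAB.1.
have dx := deg_split esym x maxAB.1; have dx3 := deg_le3 x.
have Ax1 := matching_deg_in x mA; have Bx1 := matching_deg_in x mB.
case: (eqVneq (deg e x) 3) => [dx_eq3|]; last by lia.
have small t : rest_rel e A B x t -> deg e t <= 2.
  by move=> /(rest_rel_edge esym)/no_adjacent_deg3 not33; have := deg_le3 t; lia.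
exfalso; case: (eqVneq (deg_in A x) 1) => Ax.
  by apply: (no_rest_fork maxAB Ax _ Rx2 small); lia.
by apply: (no_rest_fork (v := x) (max_pairC maxAB)); rewrite 1?rest_relC //; lia.
Qed.

Section Shape.
Variables (A B : {set {set T}}).
Hypothesis maxAB : max_pair e A B.
Local Notation R := (rest_rel e A B).

Lemma rest_deg2_nbr x y : deg R x = 2 -> R x y -> deg R y = 1.
Proof.
move=> Rx2 Rxy.
have := deg_split esym x maxAB.1; rewrite (rest_deg2_deg maxAB Rx2) Rx2 => dx.
have Ax : deg_in A x = 0 by lia.
have Bx : deg_in B x = 0 by lia.
have Ay := rest_nbr_covered esym maxAB Rxy Ax.
have By := rest_nbr_coveredC esym maxAB Rxy Bx.
have /deg_gt0 Ry : R y x by rewrite rest_rel_sym.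
have dy := deg_split esym y maxAB.1; have dy3 := deg_le3 y.
lia.
Qed.

Lemma exists_rest_comp_P3 a b x : deg R b = 2 -> R b a -> x \in [:: a; b] ->
  exists c, is_path_comp e A B [set z | connect R x z] [:: a; b; c].
Proof.
move=> Rb2 Rba xab; have [c ac Nb] := deg_eq2_nbr Rb2 Rba.
exists c; apply: is_path_comp_P3 => //.
- by apply: (rest_deg2_nbr Rb2); rewrite Nb eqxx.
- by apply: (rest_deg2_nbr Rb2); rewrite Nb eqxx orbT.
- by move: xab; rewrite !inE => /orP[]->; rewrite ?orbT.
Qed.

Lemma rest_comp_shape C : C \in rest_comps e A B ->
  (exists a b, is_path_comp e A B C [:: a; b]) \/
  (exists a b c, is_path_comp e A B C [:: a; b; c] /\ deg e b = 2).
Proof.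
move=> /imsetP[x]; rewrite inE => /existsP[y Rxy] ->.
have Ryx : R y x by rewrite rest_rel_sym.
case: (eqVneq (deg R x) 2) => [Rx2|Rx].
  have [|c P3] := exists_rest_comp_P3 (x := x) Rx2 Rxy.
    by rewrite !inE eqxx orbT.
  by right; exists y, x, c; split; last exact: rest_deg2_deg maxAB Rx2.
case: (eqVneq (deg R y) 2) => [Ry2|Ry].
  have [|c P3] := exists_rest_comp_P3 (x := x) Ry2 Ryx.
    by rewrite !inE eqxx.
  by right; exists x, y, c; split; last exact: rest_deg2_deg maxAB Ry2.
have Rx1 : deg R x = 1 by have := rest_deg_le2 maxAB x; have := deg_gt0 Rxy; lia.
have Ry1 : deg R y = 1 by have := rest_deg_le2 maxAB y; have := deg_gt0 Ryx; lia.
by left; exists x, y; apply: is_path_comp_P2; rewrite ?inE ?eqxx.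
Qed.

End Shape.

End Classification.

Theorem lemma1 (T : finType) (e : rel T) (M1 M2 : {set {set T}}) :
  simple_graph e ->
  connected_graph e ->
  (forall x, deg e x <= 3) ->
  (forall x, 2 <= deg e x) ->
  (forall x y, e x y -> ~ (deg e x = 3 /\ deg e y = 3)) ->
  optimal_pair e M1 M2 ->
  forall C, C \in rest_comps e M1 M2 ->
    (exists a b, is_path_comp e M1 M2 C [:: a; b]) \/
    (exists a b c, is_path_comp e M1 M2 C [:: a; b; c] /\ deg e b = 2).
Proof.
move=> [esym eirr] _ deg_le3 _ no_adjacent_deg3 [dM maxM _] C.
exact: (rest_comp_shape esym eirr deg_le3 no_adjacent_deg3 (conj dM maxM)).
Qed.
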